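(* For $a\in\{0,1\}$ let $f^a(\rho)=\Pr\{R=\rho\mid A=a,Y=1\}$ for $\rho\in\mathcal{R}$. Suppose that for all $\rho,\rho'\in\mathcal{R}$ with $\rho>\rho'$ we have $f^0(\rho)-f^1(\rho)>f^0(\rho')-f^1(\rho')$ and $f_R(\rho)<f_R(\rho')$, and that $f^0(\rho)-f^1(\rho)\ge0$ for $\rho\in\{\rho_2,\dots,\rho_{n'}\}$. Then: 1. $\gamma(\epsilon)>0$ for all $\epsilon>0$ (i.e. $\mathscr{A}_\epsilon$ is always biased in favor of individuals with $A=0$); 2. $\gamma(\epsilon)<\gamma_\infty$ for all $\epsilon\ge0$, where $\gamma_\infty=\lim_{\epsilon\to+\infty}\gamma(\epsilon)$.
   Context: There are $n$ individuals indexed by $\mathcal{N}=\{1,\dots,n\}$. Individual $i$ is described by a random tuple $(X_i,A_i,Y_i)$, with features $X_i\in\mathcal{X}$, protected attribute $A_i\in\{0,1\}$ and qualification state $Y_i\in\{0,1\}$; the tuples are i.i.d. with a common distribution $\mathsf{F}$, and $(X,A,Y)$ denotes a generic tuple with distribution $\mathsf{F}$. A fixed function $r:\mathcal{X}\to\mathcal{R}$ is given, with $\mathcal{R}=\{\rho_1,\dots,\rho_{n'}\}\subset[0,1]$ finite, $\rho_1=0$, $\rho_{n'}=1$; $R_i=r(X_i)$, $R=r(X)$, and $f_R$ is the probability mass function of $R$. Conditioning events $\{A=a,Y=1\}$ are assumed to have positive probability. For $\epsilon\ge0$, define $Z_{i,\epsilon}=\exp(\epsilon R_i/2)/\sum_{j=1}^n\exp(\epsilon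 R_j/2)$, which is the probability that the exponential mechanism $\mathscr{A}_\epsilon$ selects $i$ given the scores, and $\gamma(\epsilon)=E\{Z_{i,\epsilon}\mid A_i=0,Y_i=1\}-E\{Z_{i,\epsilon}\mid A_i=1,Y_i=1\}$ (independent of $i$). The limit $\gamma_\infty=\lim_{\epsilon\to+\infty}\gamma(\epsilon)$ exists. *)

From HB Require Import structures.
From mathcomp Require Import all_boot all_order all_algebra.
From mathcomp Require Import all_classical all_reals all_analysis.
Set Implicit Arguments. Unset Strict Implicit. Unset Printing Implicit Defensive.
Import Order.TTheory GRing.Theory Num.Theory.
Local Open Scope ring_scope.

(* One individual's observable data: (index k of the score value rho_k, A, Y).
   A = 1 is encoded as [true], A = 0 as [false]; Y = 1 as [true]. *)
Definition atom (m : nat) := ('I_m * bool * bool)%type.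

Section Model.
Variables (R : realType) (m n : nat).
Variable rho : 'I_m -> R.
Variable p : atom m -> R.               (* joint pmf of (R, A, Y) under F *)

(* a population of n individuals: i.i.d. draws, product pmf *)
Definition outcome := {ffun 'I_n -> atom m}.
Definition Pn (w : outcome) : R := \prod_(i < n) p (w i).

Definition score (w : outcome) (i : 'I_n) : R := rho (w i).1.1.
Definition attrA (w : outcome) (i : 'I_n) : bool := (w i).1.2.
Definition qualY (w : outcome) (i : 'I_n) : bool := (w i).2.

(* Z_{i,eps}: probability that the exponential mechanism selects i *)
Definition Zsel (eps : R) (i : 'I_n) (w : outcome) : R :=
  expR (eps * score w i / 2) / \sum_(j < n) expR (eps * score w j / 2).

Definition condEZ (eps : R) (i : 'I_n) (a : bool) : R :=
  (\sum_(w : outcome | (attrA w i == a) && qualY w i) Pn w * Zsel eps i w)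
  / (\sum_(w : outcome | (attrA w i == a) && qualY w i) Pn w).

Definition gamma (i : 'I_n) (eps : R) : R :=
  condEZ eps i false - condEZ eps i true.

Definition fcond (a : bool) (k : 'I_m) : R :=
  p (k, a, true) / \sum_(k' < m) p (k', a, true).

Definition fR (k : 'I_m) : R := \sum_(a : bool) \sum_(y : bool) p (k, a, y).

End Model.

From HB Require Import structures.
From mathcomp Require Import all_boot all_order all_algebra.
From mathcomp Require Import all_classical all_reals all_analysis.
From mathcomp Require Import fingroup perm zify.
From mathcomp.algebra_tactics Require Import ring lra.
Set Implicit Arguments. Unset Strict Implicit. Unset Printing Implicit Defensive.
Import Order.TTheory GRing.Theory Num.Theory.
Import numFieldNormedType.Exports.
Local Open Scope classical_set_scope.
Local Open Scope ring_scope.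

(* Conditioning on the data of individual i turns E{Z_i | A_i = a, Y_i = 1} into
   the f^a-average of G(k), the chance that i is selected when its score is
   rho_k, averaged over the other individuals.  Hence gamma(eps) is a positive
   multiple of sum_k d_k G(k) with d = f^0 - f^1.  The weights d_k sum to zero,
   are nonnegative for k > 0 and positive at the top score, and G is increasing
   for eps > 0, so gamma(eps) > 0.
   As eps -> +oo the mechanism tends to the uniform choice among the maximal
   scores, and gamma_oo - gamma(eps) is a positive multiple of sum_k d_k s_k,
   where s_k is the excess selection chance of i at score rho_k.  The limit
   mechanism puts all its mass on the highest score present, so by
   exchangeability of the individuals the tail sums sum_(k >= l) f_R(k) s_k are
   nonnegative, and they vanish for l = 0.  As d_k / f_R(k) increases with k,
   Abel summation then gives sum_k d_k s_k > 0, strictness coming from the top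
   score, where s is positive. *)

Section WeightedSums.
Variable R : realFieldType.

Lemma psumr_gt0 (I : finType) (P : pred I) (F : I -> R) i0 :
  P i0 -> (forall i, P i -> 0 <= F i) -> 0 < F i0 -> 0 < \sum_(i | P i) F i.
Proof.
move=> Pi0 F_ge0 Fi0; rewrite (bigD1 i0) //= ltr_pwDl // sumr_ge0 // => i /andP[/F_ge0 //].
Qed.

Lemma sum0_max_gt0 (I : finType) (d : I -> R) i0 i1 : i0 != i1 ->
  (forall i, i != i1 -> d i < d i1) -> \sum_i d i = 0 -> 0 < d i1.
Proof.
move=> i01 d_lt d_sum0.
have : 0 < \sum_i (d i1 - d i).
  apply: (psumr_gt0 _ (i0 := i0)) => // [i _|]; last by rewrite subr_gt0 d_lt.
  by have [->|/d_lt/ltW] := eqVneq i i1; rewrite ?subrr // subr_ge0.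
rewrite sumrB d_sum0 subr0 sumr_const -mulr_natr pmulr_lgt0 // ltr0n.
by apply/card_gt0P; exists i0.
Qed.

Lemma sum0_weighted_gt0 (I : finType) (d t : I -> R) i0 i1 :
  (forall i, i != i0 -> 0 <= d i) -> \sum_i d i = 0 -> 0 < d i1 ->
  (forall i, t i0 <= t i) -> t i0 < t i1 ->
  0 < \sum_i d i * t i.
Proof.
move=> d_ge0 d_sum0 d_i1 t_min t_i1.
have -> : \sum_i d i * t i = \sum_i d i * (t i - t i0).
  under [RHS]eq_bigr do rewrite mulrBr.
  by rewrite sumrB -mulr_suml d_sum0 mul0r subr0.
apply: (psumr_gt0 _ (i0 := i1)) => [//|i _|]; last by rewrite mulr_gt0 // subr_gt0.
have [->|/d_ge0 ?] := eqVneq i i0; first by rewrite subrr mulr0.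
by rewrite mulr_ge0 // subr_ge0.
Qed.

Lemma abel_le (c a : nat -> R) N : (forall k, c k <= c k.+1) ->
  (forall l, (0 < l)%N -> 0 <= \sum_(l <= k < N) a k) ->
  c 0%N * \sum_(0 <= k < N) a k <= \sum_(0 <= k < N) c k * a k.
Proof.
elim: N c a => [|N IH] c a c_incr tail_ge0; first by rewrite !big_geq ?mulr0.
rewrite !big_nat_recl // mulrDr lerD2l.
have tail1 : 0 <= \sum_(0 <= k < N) a k.+1.
  by have := tail_ge0 1%N isT; rewrite big_add1.
apply: le_trans (IH (c \o succn) (a \o succn) _ _) => //=.
- exact: ler_wpM2r tail1 _ _ (c_incr 0%N).
- by move=> l _; have := tail_ge0 l.+1 isT; rewrite big_add1.
Qed.

Lemma ler_ratio (a b x y : R) :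
  0 <= b -> a <= b -> 0 < y -> y <= x -> a / x <= b / y.
Proof.
move=> b_ge0 ab y_gt0 yx; have x_gt0 : 0 < x by apply: lt_le_trans yx.
rewrite ler_pdivrMr // mulrAC ler_pdivlMr //.
have [a_le0|a_gt0] := lerP a 0; nra.
Qed.

Lemma abel_weighted_gt0 (d f s : nat -> R) N : (0 < N)%N ->
  (forall k, (0 < k <= N)%N -> 0 <= d k) ->
  (forall k k', (k < k' <= N)%N -> d k < d k' /\ f k' < f k) ->
  0 <= f N -> 0 < d N -> 0 < s N ->
  (forall l, (0 < l)%N -> 0 <= \sum_(l <= k < N.+1) f k * s k) ->
  \sum_(0 <= k < N.+1) f k * s k = 0 ->
  0 < \sum_(0 <= k < N.+1) d k * s k.
Proof.
move=> N_gt0 d_ge0 mono fN_ge0 dN_gt0 sN_gt0 tail_ge0 tot0.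
have f_gt0 k : (k < N)%N -> 0 < f k.
  by move=> kN; apply: le_lt_trans fN_ge0 (mono k N _).2; rewrite kN /=.
(* c_k = d_k / f_k, frozen from N - 1 on since f_N may vanish, is nondecreasing;
   Abel summation handles c_k f_k s_k and the remainder (d_N - c_N f_N) s_N > 0. *)
pose c k := if (k < N)%N then d k / f k else d N.-1 / f N.-1.
have c_incr k : c k <= c k.+1.
  rewrite /c; case: (ltngtP k.+1 N) => [kN|Nk|<-].
  - have [dk dk1] : d k < d k.+1 /\ f k.+1 < f k by apply: mono; rewrite ltnSn ltnW.
    apply: ler_ratio; [exact/d_ge0/ltnW | exact: ltW | exact: f_gt0 | exact: ltW].
  - by [].
  - by [].
have -> : \sum_(0 <= k < N.+1) d k * s k =
    \sum_(0 <= k < N.+1) c k * (f k * s k) + (d N - c N * f N) * s N.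
  rewrite !big_nat_recr //= -addrA; congr (_ + _); last by ring.
  apply: eq_big_nat => k /andP[_ kN].
  by rewrite /c kN mulrA divfK // gt_eqF // f_gt0.
apply: ltr_wpDl.
  by apply: le_trans (abel_le c_incr _) => //; rewrite tot0 mulr0.
rewrite mulr_gt0 // subr_gt0 /c ltnn.
have N1_lt : (N.-1 < N)%N by rewrite prednK.
have [dN1 fN1] : d N.-1 < d N /\ f N < f N.-1 by apply: mono; rewrite N1_lt /=.
have f1_gt0 := f_gt0 _ N1_lt.
rewrite mulrAC ltr_pdivrMr //.
have [d1_le0|d1_gt0] := lerP (d N.-1) 0; nra.
Qed.

Lemma abel_weighted_gt0_ord N (d f s : 'I_N.+1 -> R) : (0 < N)%N ->
  (forall k : 'I_N.+1, (0 < k)%N -> 0 <= d k) ->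
  (forall k k' : 'I_N.+1, (k < k')%N -> d k < d k' /\ f k' < f k) ->
  0 <= f ord_max -> 0 < d ord_max -> 0 < s ord_max ->
  (forall l : nat, (0 < l)%N -> 0 <= \sum_(k : 'I_N.+1 | (l <= k)%N) f k * s k) ->
  \sum_k f k * s k = 0 ->
  0 < \sum_k d k * s k.
Proof.
move=> N_gt0 d_ge0 mono fN_ge0 dN_gt0 sN_gt0 tail_ge0 tot0.
have inord_max : inord N = ord_max :> 'I_N.+1 by apply: val_inj; rewrite /= inordK.
have sum_inord (F : 'I_N.+1 -> R) l :
    \sum_(k : 'I_N.+1 | (l <= k)%N) F k = \sum_(l <= k < N.+1) F (inord k).
  by rewrite big_geq_mkord; apply: eq_big => [k|k _]; rewrite ?inord_val.
have := sum_inord (fun k => d k * s k) 0%N; rewrite (eq_bigl xpredT) // => ->.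
apply: (abel_weighted_gt0 (f := f \o inord)) => //=; rewrite ?inord_max //.
- by move=> k /andP[k_gt0 kN]; apply: d_ge0; rewrite inordK.
- by move=> k k' /andP[kk' k'N]; apply: mono; rewrite !inordK; lia.
- by move=> l /tail_ge0; rewrite sum_inord.
- by rewrite -(sum_inord (fun k => f k * s k) 0%N) -[RHS]tot0; apply: eq_bigl.
Qed.
End WeightedSums.

Section ExponentialMechanism.
Variables (R : realType) (n : nat).
Implicit Types (eps : R) (sc : 'I_n -> R).

Definition expmech eps sc j : R :=
  expR (eps * sc j / 2) / \sum_(k < n) expR (eps * sc k / 2).

Definition expmech_oo sc j : R :=
  if [forall k, sc k <= sc j] then (\sum_(k < n) ((sc k == sc j)%:R : R))^-1 else 0.

Definition excess eps sc j : R := expmech_oo sc j - expmech eps sc j.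

Lemma sumr_expR_gt0 (f : 'I_n -> R) (j0 : 'I_n) : 0 < \sum_(k < n) expR (f k).
Proof. by apply: (psumr_gt0 (i0 := j0)); rewrite ?expR_gt0 // => k _; apply: expR_ge0. Qed.

Lemma count_eq_gt0 sc j : 0 < \sum_(k < n) ((sc k == sc j)%:R : R).
Proof. by apply: (psumr_gt0 (i0 := j)); rewrite ?eqxx // => k _; apply: ler0n. Qed.

Lemma exists_argmax sc (j0 : 'I_n) : exists j1, forall k, sc k <= sc j1.
Proof. by case: (arg_maxP sc (isT : xpredT j0)) => j1 _ j1_max; exists j1 => k; apply: j1_max. Qed.

Lemma expmech_ge0 eps sc j : 0 <= expmech eps sc j.
Proof. by rewrite divr_ge0 ?expR_ge0 ?sumr_ge0 // => k _; apply: expR_ge0. Qed.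

Lemma sum_expmech eps sc (j0 : 'I_n) : \sum_j expmech eps sc j = 1.
Proof. by rewrite -mulr_suml mulfV // gt_eqF // (sumr_expR_gt0 _ j0). Qed.

Lemma expmechE eps sc j :
  expmech eps sc j = (\sum_(k < n) expR (eps * (sc k - sc j) / 2))^-1.
Proof.
rewrite /expmech [in RHS](eq_bigr (fun k => expR (eps * sc k / 2) / expR (eps * sc j / 2))).
  by rewrite -mulr_suml invfM invrK mulrC.
by move=> k _; rewrite -expRN -expRD mulrBr mulrBl.
Qed.

Lemma expmech_ooE sc j1 j : (forall k, sc k <= sc j1) ->
  expmech_oo sc j = if sc j == sc j1 then (\sum_(k < n) ((sc k == sc j1)%:R : R))^-1 else 0.
Proof.
move=> j1_max; rewrite /expmech_oo.
have [->|ne] := eqVneq (sc j) (sc j1); first by have /forallP -> := j1_max.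
by case: forallP => // j_max; move: ne; rewrite eq_le j1_max j_max.
Qed.

Lemma sum_expmech_oo sc (j0 : 'I_n) : \sum_j expmech_oo sc j = 1.
Proof.
have [j1 j1_max] := exists_argmax sc j0.
rewrite (eq_bigr (fun j => (sc j == sc j1)%:R / \sum_(k < n) ((sc k == sc j1)%:R : R))).
  by rewrite -mulr_suml mulfV // gt_eqF // count_eq_gt0.
by move=> j _; rewrite (expmech_ooE _ j1_max); case: eqP; rewrite ?mul1r ?mul0r.
Qed.

Lemma expmech_perm eps sc (s : {perm 'I_n}) j :
  expmech eps (sc \o s) j = expmech eps sc (s j).
Proof. by rewrite /expmech [in RHS](reindex_inj (@perm_inj _ s)). Qed.

Lemma expmech_oo_perm sc (s : {perm 'I_n}) j :
  expmech_oo (sc \o s) j = expmech_oo sc (s j).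
Proof.
rewrite /expmech_oo [in RHS](reindex_inj (@perm_inj _ s)) /=; congr (if _ then _ else _).
apply/forallP/forallP => s_max k //.
by have := s_max (s^-1 k)%g; rewrite permKV.
Qed.

Lemma excess_perm eps sc (s : {perm 'I_n}) j :
  excess eps (sc \o s) j = excess eps sc (s j).
Proof. by rewrite /excess expmech_perm expmech_oo_perm. Qed.

Lemma expR_mulr_cvg0 (c : R) : c < 0 -> expR (x * c) @[x --> +oo] --> 0.
Proof.
move=> c_lt0.
have lin : (- c) * x @[x --> +oo] --> +oo.
  by apply: gt0_cvgMry; rewrite ?oppr_gt0 //; apply: cvg_id.
have := cvg_comp _ _ lin (@cvgr_expR R).
by under eq_cvg do rewrite /= mulNr opprK mulrC.
Qed.

Lemma expmech_cvg sc j : expmech eps sc j @[eps --> +oo] --> expmech_oo sc j.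
Proof.
have [j_max|/forallPn[k]] := boolP [forall k, sc k <= sc j].
  rewrite /expmech_oo j_max; under eq_cvg do rewrite expmechE.
  apply: cvgV; first by rewrite gt_eqF // count_eq_gt0.
  apply: cvg_big => [|k _]; first exact: add_continuous.
  have [->|ne] := eqVneq (sc k) (sc j).
    by under eq_cvg do rewrite subrr mulr0 mul0r expR0; apply: cvg_cst.
  under eq_cvg do rewrite -mulrA.
  apply: expR_mulr_cvg0; rewrite pmulr_llt0 // subr_lt0 lt_neqAle ne.
  by move/forallP: j_max; apply.
rewrite -ltNge => jk; rewrite /expmech_oo; case: forallP => [/(_ k)|_].
  by rewrite leNgt jk.
apply: (squeeze_cvgr (f := cst 0) (h := fun eps => expR (eps * ((sc j - sc k) / 2)))).
- near=> eps; rewrite expmech_ge0 /= expmechE -[leRHS]invrK.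
  rewrite lef_pV2 ?posrE ?invr_gt0 ?expR_gt0 ?(sumr_expR_gt0 _ j) //.
  rewrite (bigD1 k) //= -expRN ler_wpDr ?sumr_ge0 //.
  by rewrite ler_expR [leLHS](_ : _ = eps * (sc k - sc j) / 2) //; ring.
- exact: cvg_cst.
- by apply: expR_mulr_cvg0; rewrite pmulr_llt0 // subr_lt0.
Unshelve. all: end_near.
Qed.

Lemma expmech_le eps sc1 sc2 j : 0 <= eps ->
  (forall k, k != j -> sc1 k = sc2 k) -> sc1 j <= sc2 j ->
  expmech eps sc1 j <= expmech eps sc2 j.
Proof.
move=> eps_ge0 same le12; rewrite !expmechE lef_pV2 ?posrE ?(sumr_expR_gt0 _ j) //.
apply: ler_sum => k _; rewrite ler_expR.
by have [->|/same ->] := eqVneq k j; rewrite ?subrr //; nra.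
Qed.

Lemma expmech_lt eps sc1 sc2 j k0 : 0 < eps -> k0 != j ->
  (forall k, k != j -> sc1 k = sc2 k) -> sc1 j < sc2 j ->
  expmech eps sc1 j < expmech eps sc2 j.
Proof.
move=> eps_gt0 k0j same lt12; rewrite !expmechE ltf_pV2 ?posrE ?(sumr_expR_gt0 _ j) //.
rewrite [ltLHS](bigD1 k0) // [ltRHS](bigD1 k0) //= ltr_leD //.
  by rewrite ltr_expR (same _ k0j); nra.
apply: ler_sum => k _; rewrite ler_expR.
by have [->|/same ->] := eqVneq k j; rewrite ?subrr //; nra.
Qed.

Lemma expmech_le_oo eps sc j : (forall k, sc k <= sc j) ->
  expmech eps sc j <= expmech_oo sc j.
Proof.
move=> j_max; rewrite (expmech_ooE _ j_max) eqxx expmechE.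
rewrite lef_pV2 ?posrE ?count_eq_gt0 ?(sumr_expR_gt0 _ j) //.
apply: ler_sum => k _; case: eqP => [->|_]; last exact: expR_ge0.
by rewrite subrr mulr0 mul0r expR0.
Qed.

Lemma expmech_lt_oo eps sc j k0 : (forall k, sc k <= sc j) -> sc k0 < sc j ->
  expmech eps sc j < expmech_oo sc j.
Proof.
move=> j_max k0_lt; rewrite (expmech_ooE _ j_max) eqxx expmechE.
rewrite ltf_pV2 ?posrE ?count_eq_gt0 ?(sumr_expR_gt0 _ j) //.
rewrite [ltLHS](bigD1 k0) // [ltRHS](bigD1 k0) //= (lt_eqF k0_lt) ltr_leD ?expR_gt0 //.
apply: ler_sum => k _; case: eqP => [->|_]; last exact: expR_ge0.
by rewrite subrr mulr0 mul0r expR0.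
Qed.

Lemma sum_excess eps sc (j0 : 'I_n) : \sum_j excess eps sc j = 0.
Proof. by rewrite sumrB (sum_expmech_oo _ j0) (sum_expmech _ _ j0) subrr. Qed.

Lemma sum_excess_upper_ge0 eps sc (U : pred 'I_n) :
  (forall j j', sc j <= sc j' -> U j -> U j') ->
  0 <= \sum_(j | U j) excess eps sc j.
Proof.
move=> U_up; rewrite sumrB subr_ge0.
case: (pickP U) => [j0 Uj0|U0]; last by rewrite !big_pred0.
have [j1 j1_max] := exists_argmax sc j0.
have -> : \sum_(j | U j) expmech_oo sc j = 1.
  rewrite -(sum_expmech_oo sc j0) [RHS](bigID U) /= [X in _ = _ + X]big1 ?addr0 // => j Uj.
  rewrite (expmech_ooE _ j1_max); case: eqP => // eq_j1; case/negP: Uj.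
  by apply: U_up (U_up _ _ (j1_max j0) Uj0); rewrite eq_j1.
rewrite -(sum_expmech eps sc j0) [leRHS](bigID U) /= lerDl.
by apply: sumr_ge0 => j _; apply: expmech_ge0.
Qed.
End ExponentialMechanism.

Section Conditioning.
Variables (R : realType) (m n : nat) (p : atom m -> R) (i : 'I_n).
Local Notation outcome := (outcome m n).
Implicit Types (w : outcome) (x : atom m).

Definition upd w x : outcome := [ffun j => if j == i then x else w j].

Definition Pothers w : R := \prod_(j < n | j != i) p (w j).

Lemma Pn_split w : Pn p w = p (w i) * Pothers w.
Proof. by rewrite /Pn (bigD1 i). Qed.

Lemma upd_at w x : upd w x i = x.
Proof. by rewrite ffunE eqxx. Qed.

Lemma upd_upd w x y : upd (upd w x) y = upd w y.
Proof. by apply/ffunP => j; rewrite !ffunE; case: (j == i). Qed.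

Lemma upd_id w : upd w (w i) = w.
Proof. by apply/ffunP => j; rewrite ffunE; case: eqP => // ->. Qed.

Lemma Pothers_upd w x : Pothers (upd w x) = Pothers w.
Proof. by apply: eq_bigr => j /negbTE ji; rewrite ffunE ji. Qed.

Lemma score_upd (rho : 'I_m -> R) w x j :
  score rho (upd w x) j = if j == i then rho x.1.1 else score rho w j.
Proof. by rewrite /score ffunE; case: eqP. Qed.

Lemma sum_upd (F : outcome -> R) x y :
  \sum_(w : outcome | w i == x) Pothers w * F w
  = \sum_(w : outcome | w i == y) Pothers w * F (upd w x).
Proof.
rewrite (reindex_onto (upd^~ x) (upd^~ y)) => [|w /eqP <-]; last by rewrite upd_upd upd_id.
apply: eq_big => [w|w _]; last by rewrite Pothers_upd.
rewrite upd_at eqxx upd_upd.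
by apply/eqP/eqP => [<-|<-]; rewrite ?upd_at ?upd_id.
Qed.

Lemma sum_by_atom (P : pred (atom m)) (F : outcome -> R) :
  \sum_(w : outcome | P (w i)) Pn p w * F w
  = \sum_(x | P x) p x * \sum_(w : outcome | w i == x) Pothers w * F w.
Proof.
rewrite (partition_big (fun w => w i) P) //=; apply: eq_bigr => x Px.
rewrite big_distrr /=; apply: eq_big => [w|w /andP[_ /eqP <-]].
  by rewrite andb_idl // => /eqP ->.
by rewrite Pn_split mulrA.
Qed.

Definition index_invariant (F : outcome -> R) :=
  forall w x y, x.1.1 = y.1.1 -> F (upd w x) = F (upd w y).

Lemma index_invariant_score (rho : 'I_m -> R) (H : ('I_n -> R) -> R) :
  index_invariant (fun w => H (score rho w)).
Proof.
move=> w x y xy; congr H; apply/funext => j.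
by rewrite !score_upd xy.
Qed.

Variable x0 : atom m.

(* The configurations of the other individuals are enumerated as the outcomes
   with [w i = x0]; [Egiven F k] is the (unnormalized) mean of [F] over them
   when individual [i] is given the score index [k]. *)
Definition Egiven (F : outcome -> R) (k : 'I_m) : R :=
  \sum_(w : outcome | w i == x0) Pothers w * F (upd w (k, false, false)).

Lemma sum_at_atom (F : outcome -> R) x : index_invariant F ->
  \sum_(w : outcome | w i == x) Pothers w * F w = Egiven F x.1.1.
Proof.
move=> F_inv; rewrite (sum_upd F x x0); apply: eq_bigr => w _.
by rewrite (F_inv _ _ (x.1.1, false, false)).
Qed.

Lemma sum_atom (H : atom m -> R) :
  \sum_x H x = \sum_(k < m) \sum_(a : bool) \sum_(y : bool) H (k, a, y).
Proof. by rewrite pair_bigA /= pair_bigA; apply: eq_bigr => -[[]]. Qed.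

Lemma sum_cond_AY (F : outcome -> R) a : index_invariant F ->
  \sum_(w : outcome | (attrA w i == a) && qualY w i) Pn p w * F w
  = \sum_(k < m) p (k, a, true) * Egiven F k.
Proof.
move=> F_inv; rewrite (sum_by_atom (fun x => (x.1.2 == a) && x.2)) big_mkcond sum_atom.
apply: eq_bigr => k _; rewrite !big_bool /=.
by case: a; rewrite /= ?addr0 ?add0r sum_at_atom.
Qed.

Lemma sum_cond_index (P : pred 'I_m) (F : outcome -> R) : index_invariant F ->
  \sum_(w : outcome | P (w i).1.1) Pn p w * F w = \sum_(k | P k) fR p k * Egiven F k.
Proof.
move=> F_inv; rewrite (sum_by_atom (fun x => P x.1.1)) big_mkcond sum_atom [RHS]big_mkcond.
apply: eq_bigr => k _; case: (P k); last by rewrite !big1.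
rewrite /fR !mulr_suml; apply: eq_bigr => a _; rewrite mulr_suml.
by apply: eq_bigr => y _; rewrite sum_at_atom.
Qed.
End Conditioning.

Section Exchangeability.
Variables (R : realType) (m n : nat) (p : atom m -> R).
Local Notation outcome := (outcome m n).

Definition permw (s : {perm 'I_n}) (w : outcome) : outcome := [ffun j => w (s j)].

Lemma sum_Pn_permw (F : outcome -> R) s :
  \sum_(w : outcome) Pn p w * F (permw s w) = \sum_(w : outcome) Pn p w * F w.
Proof.
rewrite [RHS](reindex (permw s)) /=.
  apply: eq_bigr => w _; congr (_ * _).
  by rewrite /Pn (reindex_inj (@perm_inj _ s)); apply: eq_bigr => j _; rewrite ffunE.
by exists (permw s^-1) => w _; apply/ffunP => j; rewrite !ffunE ?permKV ?permK.
Qed.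

Lemma sum_Pn_exchangeable (G : outcome -> 'I_n -> R) i :
  (forall s w j, G (permw s w) j = G w (s j)) ->
  (\sum_(w : outcome) Pn p w * G w i) *+ n = \sum_(w : outcome) Pn p w * \sum_j G w j.
Proof.
move=> G_equi; rewrite -[X in _ *+ X](card_ord n) -sumr_const.
under eq_bigr => j _ do rewrite -(sum_Pn_permw _ (tperm i j)).
under eq_bigr => j _ do under eq_bigr => w _ do rewrite G_equi tpermL.
by rewrite exchange_big; apply: eq_bigr => w _; rewrite big_distrr.
Qed.
End Exchangeability.

Lemma exists_other n (i : 'I_n) : (1 < n)%N -> exists j : 'I_n, j != i.
Proof.
rewrite -[n in (1 < n)%N]card_ord => /card_gt1P[x [y [_ _ xy]]].
by have [xi|] := eqVneq x i; [exists y; rewrite -xi eq_sym | exists x].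
Qed.

Lemma ord_gt1_of_values (R : eqType) m (f : 'I_m -> R) a b : a != b ->
  (exists k, f k = a) -> (exists k, f k = b) -> (1 < m)%N.
Proof.
move=> ab [ka fa] [kb fb]; rewrite ltnNge; apply/negP => m_le1.
have kab : ka = kb by apply: ord_inj; have := ltn_ord ka; have := ltn_ord kb; lia.
by move: ab; rewrite -fa -fb kab eqxx.
Qed.

Section Bias.
Variables (R : realType) (N n : nat) (rho : 'I_N.+2 -> R) (p : atom N.+2 -> R).
Variable i : 'I_n.
Hypothesis n_ge2 : (2 <= n)%N.
Hypothesis rho_incr : forall k k' : 'I_N.+2, (k < k')%N -> rho k < rho k'.
Hypothesis p_ge0 : forall x, 0 <= p x.
Hypothesis cond_pos : forall a : bool, 0 < \sum_(k < N.+2) p (k, a, true).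
Hypothesis H_mono : forall k k' : 'I_N.+2, rho k > rho k' ->
  fcond p false k - fcond p true k > fcond p false k' - fcond p true k'
  /\ fR p k < fR p k'.
Hypothesis H_nonneg :
  forall k : 'I_N.+2, (0 < k)%N -> 0 <= fcond p false k - fcond p true k.
Local Notation outcome := (outcome N.+2 n).
Implicit Types (k : 'I_N.+2) (eps : R) (w : outcome).

Let x0 : atom N.+2 := (ord0, false, false).
Local Notation Egiven := (Egiven p i x0).
Local Notation Pothers := (Pothers p i).
Local Notation upd := (upd i).

Definition fdiff k := fcond p false k - fcond p true k.
Definition sel eps (w : outcome) := expmech eps (score rho w) i.
Definition sel_oo (w : outcome) := expmech_oo (score rho w) i.
Definition exc eps (w : outcome) := excess eps (score rho w) i.
Definition mass_others := \sum_(w : outcome | w i == x0) Pothers w.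

Lemma rho_le_index k k' : rho k <= rho k' -> (k <= k')%N.
Proof. by apply: contraTT; rewrite -!ltnNge -ltNge => /rho_incr. Qed.

Lemma lt_ord_max k : k != ord_max -> (k < N.+1)%N.
Proof. by rewrite ltn_neqAle -ltnS ltn_ord andbT. Qed.

Lemma rho_le_max k : rho k <= rho ord_max.
Proof.
have [->|/lt_ord_max k_lt] := eqVneq k ord_max; first exact: lexx.
exact/ltW/rho_incr.
Qed.

Lemma fdiff_fR_mono k k' : (k < k')%N -> fdiff k < fdiff k' /\ fR p k' < fR p k.
Proof. by move/rho_incr/H_mono. Qed.

Lemma sum_fdiff : \sum_k fdiff k = 0.
Proof. by rewrite sumrB /fcond -!mulr_suml !mulfV ?subrr // gt_eqF. Qed.

Lemma fdiff_max_gt0 : 0 < fdiff ord_max.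
Proof.
apply: (sum0_max_gt0 (i0 := ord0)) sum_fdiff => // k /lt_ord_max k_lt.
exact: (fdiff_fR_mono (k' := ord_max) k_lt).1.
Qed.

Lemma Pn_ge0 w : 0 <= Pn p w.
Proof. exact: prodr_ge0. Qed.

Lemma exists_low_atom : exists x : atom N.+2, x.1.1 = ord0 /\ 0 < p x.
Proof.
have fR0_gt0 : 0 < fR p ord0.
  apply: le_lt_trans (fdiff_fR_mono (isT : (@ord0 N.+1 < @ord_max N.+1)%N)).2.
  by apply: sumr_ge0 => a _; apply: sumr_ge0.
have [a /andP[_ pa_gt0]] : exists a, true && (0 < \sum_(y : bool) p (ord0, a, y)).
  apply: psumr_neq0P; last exact/eqP/lt0r_neq0.
  by move=> a _; apply: sumr_ge0.
have [y /andP[_ py_gt0]] : exists y, true && (0 < p (ord0, a, y)).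
  by apply: psumr_neq0P => //; apply/eqP/lt0r_neq0.
by exists (ord0, a, y).
Qed.

Lemma exists_low_others :
  exists2 w : outcome, w i == x0 & 0 < Pothers w /\ forall j, j != i -> (w j).1.1 = ord0.
Proof.
have [x [x_low px_gt0]] := exists_low_atom.
exists (upd [ffun=> x] x0); first by rewrite upd_at.
split=> [|j ji]; last by rewrite ffunE (negbTE ji) ffunE.
by rewrite Pothers_upd; apply: prodr_gt0 => j _; rewrite ffunE.
Qed.

Lemma mass_others_gt0 : 0 < mass_others.
Proof.
have [w wi [w_gt0 _]] := exists_low_others.
by apply: (psumr_gt0 (i0 := w)) => // w' _; apply: prodr_ge0.
Qed.

Lemma condEZE eps a :
  condEZ rho p eps i a = (\sum_k fcond p a k * Egiven (sel eps) k) / mass_others.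
Proof.
rewrite /condEZ (sum_cond_AY p x0 a (index_invariant_score i rho (fun sc => expmech eps sc i))).
have -> : \sum_(w | (attrA w i == a) && qualY w i) Pn p w
    = \sum_k p (k, a, true) * mass_others.
  under eq_bigr do rewrite -[Pn p _]mulr1.
  rewrite (sum_cond_AY p x0 a (F := fun=> 1)) //; apply: eq_bigr => k _.
  by congr (_ * _); apply: eq_bigr => w _; rewrite mulr1.
rewrite -mulr_suml /fcond; under [in RHS]eq_bigr do rewrite mulrAC.
rewrite -mulr_suml; field.
by rewrite !gt_eqF ?mass_others_gt0 ?cond_pos.
Qed.

Lemma gammaE eps :
  gamma rho p i eps = (\sum_k fdiff k * Egiven (sel eps) k) / mass_others.
Proof.
rewrite /gamma !condEZE -mulrBl -sumrB; congr (_ / _).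
by apply: eq_bigr => k _; rewrite mulrBl.
Qed.

Lemma gamma_cvg : gamma rho p i eps @[eps --> +oo]
  --> (\sum_k fdiff k * Egiven sel_oo k) / mass_others.
Proof.
under eq_cvg do rewrite gammaE.
apply: cvgMr_tmp; apply: cvg_big => [|k _]; first exact: add_continuous.
apply: cvgMl_tmp; apply: cvg_big => [|w _]; first exact: add_continuous.
by apply: cvgMl_tmp; apply: expmech_cvg.
Qed.

Lemma ltr_Egiven (F G : outcome -> R) k k' :
  (forall w, F (upd w (k, false, false)) <= G (upd w (k', false, false))) ->
  (forall w, (forall j, j != i -> (w j).1.1 = ord0) ->
     F (upd w (k, false, false)) < G (upd w (k', false, false))) ->
  Egiven F k < Egiven G k'.
Proof.
move=> FG FG_low; have [w0 w0i [w0_gt0 w0_low]] := exists_low_others.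
rewrite -subr_gt0 -sumrB; apply: (psumr_gt0 (i0 := w0)) => // [w _|]; rewrite -mulrBr.
  by rewrite mulr_ge0 ?prodr_ge0 // subr_ge0.
by rewrite mulr_gt0 // subr_gt0 FG_low.
Qed.

Lemma Egiven_sel_lt eps k k' : 0 < eps -> rho k < rho k' ->
  Egiven (sel eps) k < Egiven (sel eps) k'.
Proof.
move=> eps_gt0 kk'; have [j ji] := exists_other i n_ge2.
have others w j' : j' != i ->
    score rho (upd w (k, false, false)) j' = score rho (upd w (k', false, false)) j'.
  by move=> j'i; rewrite !score_upd (negbTE j'i).
apply: ltr_Egiven => w => [|_].
  by apply: expmech_le (ltW eps_gt0) (others w) _; rewrite !score_upd eqxx ltW.
by apply: expmech_lt eps_gt0 ji (others w) _; rewrite !score_upd eqxx.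
Qed.

Lemma gamma_gt0 eps : 0 < eps -> 0 < gamma rho p i eps.
Proof.
move=> eps_gt0; rewrite gammaE divr_gt0 ?mass_others_gt0 //.
apply: (sum0_weighted_gt0 (i0 := ord0) (i1 := ord_max) _ sum_fdiff fdiff_max_gt0).
- by move=> k k_ne0; apply: H_nonneg; rewrite lt0n.
- move=> k; have [->|k_ne0] := eqVneq k ord0; first exact: lexx.
  by apply/ltW/Egiven_sel_lt/rho_incr => //; rewrite lt0n.
- exact/Egiven_sel_lt/rho_incr.
Qed.

Lemma Egiven_exc_max_gt0 eps : 0 < Egiven (exc eps) ord_max.
Proof.
have [j ji] := exists_other i n_ge2.
have top w (j' : 'I_n) : score rho (upd w (ord_max, false, false)) j'
    <= score rho (upd w (ord_max, false, false)) i.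
  by rewrite !score_upd eqxx; case: ifP => _; apply: rho_le_max.
have -> : 0 = Egiven (fun=> 0) ord_max by apply/esym/big1 => w _; rewrite mulr0.
apply: ltr_Egiven => w => [|w_low]; rewrite /exc /excess ?subr_ge0 ?subr_gt0.
  exact: expmech_le_oo (top w).
apply: (expmech_lt_oo (k0 := j) _ (top w)).
by rewrite !score_upd eqxx (negbTE ji) /score w_low //; apply: rho_incr.
Qed.

Definition tail_exc l eps w j :=
  if (l <= (w j).1.1)%N then excess eps (score rho w) j else 0.

Lemma tail_excE l eps :
  \sum_(k : 'I_N.+2 | (l <= k)%N) fR p k * Egiven (exc eps) k
  = \sum_(w : outcome) Pn p w * tail_exc l eps w i.
Proof.
rewrite -(sum_cond_index p x0 (fun k => (l <= k)%N)
            (index_invariant_score i rho (fun sc => excess eps sc i))) big_mkcond.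
by apply: eq_bigr => w _; rewrite /tail_exc; case: ifP; rewrite ?mulr0.
Qed.

Lemma tail_exc_perm l eps s w j : tail_exc l eps (permw s w) j = tail_exc l eps w (s j).
Proof.
rewrite /tail_exc ffunE.
have -> : score rho (permw s w) = score rho w \o s by apply/funext => j'; rewrite /score ffunE.
by rewrite excess_perm.
Qed.

Lemma tail_exc_ge0 l eps : 0 <= \sum_(k : 'I_N.+2 | (l <= k)%N) fR p k * Egiven (exc eps) k.
Proof.
rewrite tail_excE -(pmulrn_lge0 _ (ltnW n_ge2)) (sum_Pn_exchangeable p i (tail_exc_perm l eps)).
apply: sumr_ge0 => w _; rewrite mulr_ge0 ?Pn_ge0 // /tail_exc -big_mkcond.
by apply: sum_excess_upper_ge0 => j j' /rho_le_index jj' lj; apply: leq_trans lj jj'.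
Qed.

Lemma tail_exc0 eps : \sum_k fR p k * Egiven (exc eps) k = 0.
Proof.
rewrite (eq_bigl (fun k => (0 <= k)%N)) // tail_excE; apply/eqP.
have := mulrn_eq0 (\sum_(w : outcome) Pn p w * tail_exc 0 eps w i) n.
rewrite eqn0Ngt (ltnW n_ge2) /= => <-.
rewrite (sum_Pn_exchangeable p i (tail_exc_perm 0 eps)) big1 // => w _.
by rewrite /tail_exc (sum_excess _ _ i) mulr0.
Qed.

Lemma gamma_lt_lim eps :
  gamma rho p i eps < (\sum_k fdiff k * Egiven sel_oo k) / mass_others.
Proof.
rewrite gammaE ltr_pM2r ?invr_gt0 ?mass_others_gt0 // -subr_gt0 -sumrB.
under eq_bigr do rewrite -mulrBr -sumrB; under eq_bigr do under eq_bigr do rewrite -mulrBr.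
apply: (abel_weighted_gt0_ord (f := fR p)) => //.
- by move=> k k' /fdiff_fR_mono.
- by apply: sumr_ge0 => a _; apply: sumr_ge0.
- exact: fdiff_max_gt0.
- exact: Egiven_exc_max_gt0.
- by move=> l _; apply: tail_exc_ge0.
- exact: tail_exc0.
Qed.
End Bias.

Theorem theorem2 (R : realType) (m n : nat) (rho : 'I_m -> R) (p : atom m -> R)
  (n_ge2 : (2 <= n)%N)
  (rho_incr : forall k k' : 'I_m, (k < k')%N -> rho k < rho k')
  (rho_range : forall k, 0 <= rho k <= 1)
  (rho_0 : exists k, rho k = 0) (rho_1 : exists k, rho k = 1)
  (p_ge0 : forall x, 0 <= p x) (p_sum1 : \sum_(x : atom m) p x = 1)
  (cond_pos : forall a : bool, 0 < \sum_(k < m) p (k, a, true))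
  (H_mono : forall k k' : 'I_m, rho k > rho k' ->
      fcond p false k - fcond p true k > fcond p false k' - fcond p true k'
      /\ fR p k < fR p k')
  (H_nonneg : forall k : 'I_m, (0 < k)%N -> 0 <= fcond p false k - fcond p true k) :
  forall i : 'I_n,
    (forall eps : R, 0 < eps -> 0 < gamma rho p i eps)
    /\ (cvg (gamma rho p i eps @[eps --> +oo%R])
        /\ forall eps : R, 0 <= eps ->
             gamma rho p i eps < lim (gamma rho p i eps @[eps --> +oo%R])).
Proof.
move=> i.
have [N m_eq] : exists N, m = N.+2.
  by exists m.-2; have := ord_gt1_of_values (oner_neq0 R) rho_1 rho_0; lia.
subst m; have gamma_cvg := gamma_cvg (i := i) rho_incr p_ge0 cond_pos H_mono.
split; first exact: gamma_gt0 i n_ge2 rho_incr p_ge0 cond_pos H_mono H_nonneg.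
split=> [|eps _]; first exact: cvgP gamma_cvg.
rewrite (cvg_lim _ gamma_cvg) //.
exact: gamma_lt_lim i n_ge2 rho_incr p_ge0 cond_pos H_mono H_nonneg eps.
Qed.
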